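(* Let $U\in\mathcal{U}_N$ and $S\subseteq[n]$. Prepare the Choi–Jamiołkowski state $|v(U)\rangle$ (using one query to $U$), measure the $2|S|$ qubits in the registers $S\cup\{\tilde\ell:\ell\in S\}$ in the Bell basis $\{|v(\sigma_y)\rangle\}_{y\in\mathbb{Z}_4^{S}}$, and let $X=0$ if the outcome is $|v(I^{\otimes|S|})\rangle=|\mathrm{EPR}\rangle^{\otimes|S|}$ and $X=1$ otherwise. Then $\mathbb{E}[X]=\mathrm{Inf}_S[U]$.
   Context: $N=2^n$, $\mathcal{U}_N$ is the set of $N\times N$ unitaries. Pauli matrices: $\sigma_0=I$, $\sigma_1=X$, $\sigma_2=Y$, $\sigma_3=Z$; for $x\in\mathbb{Z}_4^n$, $\sigma_x=\sigma_{x_1}\otimes\cdots\otimes\sigma_{x_n}$ and $\mathrm{supp}(x)=\{i:x_i\ne0\}$. Every $U\in\mathbb{C}^{N\times N}$ can be uniquely written $U=\sum_{x\in\mathbb{Z}_4^n}\widehat{U}(x)\sigma_x$ (Pauli coefficients). The influence of $S\subseteq[n]$ on $U$ is $\mathrm{Inf}_S[U]=\sum_{x:\,\mathrm{supp}(x)\cap S\ne\emptyset}|\widehat{U}(x)|^2$. The Choi–Jamiołkowski state of an $N\times N$ matrix $A$ is $|v(A)\rangle=(A\otimes I)\frac{1}{\sqrt N}\sum_{i}|i\rangle|i\rangle$ on $2n$ qubits; qubit $\ell\in[n]$ (acted on by $A$) is paired with qubit $\tilde\ell\in\{n+1,\dots,2n\}$ with which it formed an EPR pair $|\mathrm{EPR}\rangle=(|00\rangle+|11\rangle)/\sqrt2$.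 For $y\in\mathbb{Z}_4^S$, $|v(\sigma_y)\rangle$ is the corresponding state on the $2|S|$ qubits $S\cup\{\tilde\ell:\ell\in S\}$. *)

(* Complex scalars: an arbitrary numClosedFieldType C
   (e.g. algC, or R[i] for a real closed field R). *)
From HB Require Import structures.
From mathcomp Require Import all_boot all_order all_algebra.
Set Implicit Arguments. Unset Strict Implicit. Unset Printing Implicit Defensive.
Import Order.TTheory GRing.Theory Num.Theory.
Local Open Scope ring_scope.

Section Defs.
Variable C : numClosedFieldType.

(* computational basis states of n qubits: bit strings *)
Definition bits (n : nat) := {ffun 'I_n -> bool}.

(* N x N matrices (N = 2^n), indexed by bit strings: U a b = <a|U|b> *)
Definition qmat (n : nat) := bits n -> bits n -> C.

Definition unitary n (U : qmat n) : Prop :=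
  forall a b : bits n, \sum_(k : bits n) U a k * (U b k)^* = (a == b)%:R.

(* single-qubit Paulis sigma_0 = I, sigma_1 = X, sigma_2 = Y, sigma_3 = Z;
   pauli1 k a b = <a|sigma_k|b>, with false = |0>, true = |1> *)
Definition pauli1 (k : 'I_4) (a b : bool) : C :=
  match val k with
  | 0 => (a == b)%:R
  | 1 => (a != b)%:R
  | 2 => if a == b then 0 else if b then - 'i else 'i
  | _ => if a == b then (if a then -1 else 1) else 0
  end.

Definition pauli n (x : {ffun 'I_n -> 'I_4}) : qmat n :=
  fun a b => \prod_(i : 'I_n) pauli1 (x i) (a i) (b i).

Definition supp_meets n (x : {ffun 'I_n -> 'I_4}) (S : {set 'I_n}) : bool :=
  [exists i in S, x i != ord0].

(* Inf_S[U] computed from the (unique) Pauli coefficients c of U *)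
Definition influence n (c : {ffun 'I_n -> 'I_4} -> C) (S : {set 'I_n}) : C :=
  \sum_(x : {ffun 'I_n -> 'I_4} | supp_meets x S) `|c x| ^+ 2.

(* Choi-Jamiolkowski state |v(A)> = (A (x) I) 1/sqrt N sum_i |i>|i> ;
   component at |a>|b> (a on qubits 1..n, b on the paired qubits ~1..~n) *)
Definition choi n (A : qmat n) (a b : bits n) : C :=
  A a b / sqrtC (2 ^ n)%:R.

Definition inS n (S : {set 'I_n}) := {i : 'I_n | i \in S}.
Definition outS n (S : {set 'I_n}) := {i : 'I_n | i \notin S}.

Definition glue n (S : {set 'I_n}) (aS : {ffun inS S -> bool})
    (aR : {ffun outS S -> bool}) : bits n :=
  [ffun i => match (insub i : option (inS S)) with
             | Some j => aS j
             | None => match (insub i : option (outS S)) with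
                       | Some j => aR j
                       | None => false
                       end
             end].

(* Bell basis state |v(sigma_y)> on the 2|S| qubits S u {~l : l in S},
   y in Z_4^S *)
Definition bellS n (S : {set 'I_n}) (y : {ffun inS S -> 'I_4})
    (aS bS : {ffun inS S -> bool}) : C :=
  (\prod_(j : inS S) pauli1 (y j) (aS j) (bS j)) / sqrtC (2 ^ #|S|)%:R.

(* (<v(sigma_y)| (x) I) |v(U)>: unnormalised post-measurement vector on
   the remaining registers, at |c>|d> *)
Definition post_amp n (U : qmat n) (S : {set 'I_n}) (y : {ffun inS S -> 'I_4})
    (c d : {ffun outS S -> bool}) : C :=
  \sum_(aS : {ffun inS S -> bool}) \sum_(bS : {ffun inS S -> bool})
     (bellS y aS bS)^* * choi U (glue aS c) (glue bS d).

Definition outcome_prob n (U : qmat n) (S : {set 'I_n})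
    (y : {ffun inS S -> 'I_4}) : C :=
  \sum_(c : {ffun outS S -> bool}) \sum_(d : {ffun outS S -> bool})
     `|post_amp U y c d| ^+ 2.

Definition Xval n (S : {set 'I_n}) (y : {ffun inS S -> 'I_4}) : C :=
  if y == [ffun => ord0] then 0 else 1.

Definition expect_X n (U : qmat n) (S : {set 'I_n}) : C :=
  \sum_(y : {ffun inS S -> 'I_4}) outcome_prob U y * Xval y.

End Defs.

From HB Require Import structures.
From mathcomp Require Import all_boot all_order all_algebra.
From mathcomp Require Import ring.
Import GRing.Theory Num.Theory.
Set Implicit Arguments. Unset Strict Implicit. Unset Printing Implicit Defensive.
Local Open Scope ring_scope.

(* Write U = sum_x c_x sigma_x.  Projecting |v(U)> onto |v(sigma_y)> on the
   registers of S keeps, by the orthogonality Tr(sigma_p^* sigma_q) = 2 [p = q]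
   of the single-qubit Paulis, exactly the terms with x|_S = y: the
   post-measurement vector is proportional to
   sum_(x|_S = y) c_x |v(sigma_(x|_(S^c)))>.  Distinct such x differ outside S,
   so Parseval for the Pauli basis on the remaining qubits gives
   Pr[y] = sum_(x|_S = y) |c_x|^2, and summing over y <> 0 yields
   E[X] = sum_(x|_S <> 0) |c_x|^2 = Inf_S[U]. *)

Section PauliOrthogonality.
Variable C : numClosedFieldType.

Definition tensor_pauli (I : finType) (u : {ffun I -> 'I_4})
    (a b : {ffun I -> bool}) : C :=
  \prod_(j : I) pauli1 C (u j) (a j) (b j).

Lemma pauli1_orthogonal (p q : 'I_4) :
  \sum_(a : bool) \sum_(b : bool) (pauli1 C p a b)^* * pauli1 C q a b
  = 2 * (p == q)%:R.
Proof.
have conjNi : (- 'i)^* = 'i :> C by rewrite -conjCi conjCK.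
case: p => [[|[|[|[|//]]]] ?]; case: q => [[|[|[|[|//]]]] ?];
  rewrite /pauli1 /= !big_bool /= ?(rmorph0, rmorph1, conjCi, conjNi, conjCN1).
all: rewrite ?(mulr0, mul0r, mulr1, mul1r, mulrN, mulNr, opprK, addr0, add0r).
all: rewrite -?expr2 ?sqrCi ?opprK; ring.
Qed.

Lemma tensor_pauli_orthogonal (I : finType) (u v : {ffun I -> 'I_4}) :
  \sum_(a : {ffun I -> bool}) \sum_(b : {ffun I -> bool})
     (tensor_pauli u a b)^* * tensor_pauli v a b
  = 2 ^+ #|I| * (u == v)%:R.
Proof.
have -> : \sum_a \sum_b (tensor_pauli u a b)^* * tensor_pauli v a b
          = \prod_(j : I) (2 * (u j == v j)%:R).
  under [RHS]eq_bigr do rewrite -pauli1_orthogonal.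
  rewrite bigA_distr_bigA; apply: eq_bigr => a _.
  rewrite bigA_distr_bigA; apply: eq_bigr => b _.
  by rewrite rmorph_prod -big_split.
have [<-|/eqP neq_uv] := eqVneq u v.
  by under eq_bigr do rewrite eqxx mulr1; rewrite prodr_const mulr1.
have [j neq_j] : exists j, u j != v j.
  apply/existsP; apply: contra_notT neq_uv => /existsPn eq_uv.
  by apply/ffunP => j; apply/eqP/negPn.
by rewrite (bigD1 j) //= (negbTE neq_j) mulr0 mul0r mulr0.
Qed.

Lemma tensor_pauli_parseval (I J : finType) (f : J -> C)
    (h : J -> {ffun I -> 'I_4}) :
  (forall j j', f j != 0 -> f j' != 0 -> h j = h j' -> j = j') ->
  \sum_(a : {ffun I -> bool}) \sum_(b : {ffun I -> bool})
     `|\sum_j f j * tensor_pauli (h j) a b| ^+ 2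
  = 2 ^+ #|I| * \sum_j `|f j| ^+ 2.
Proof.
move=> h_inj.
have expand a b : `|\sum_j f j * tensor_pauli (h j) a b| ^+ 2
    = \sum_j \sum_j' f j * (f j')^* *
        ((tensor_pauli (h j') a b)^* * tensor_pauli (h j) a b).
  rewrite normCK rmorph_sum mulr_suml; apply: eq_bigr => j _.
  rewrite mulr_sumr; apply: eq_bigr => j' _; rewrite rmorphM; ring.
under eq_bigr do under eq_bigr do rewrite expand.
under eq_bigr do rewrite exchange_big.
under eq_bigr do under eq_bigr do rewrite exchange_big.
rewrite exchange_big mulr_sumr; apply: eq_bigr => j _.
rewrite exchange_big.
under eq_bigr do (under eq_bigr do rewrite -mulr_sumr; rewrite -mulr_sumr).
rewrite (bigD1 j) //= tensor_pauli_orthogonal eqxx big1 ?addr0 => [|j' neq_j'].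
  by rewrite normCK mulr1 mulrC.
rewrite tensor_pauli_orthogonal.
have [eq_h|] := eqVneq (h j') (h j); last by rewrite mulr0n !mulr0.
have [fj0|nz_fj] := eqVneq (f j) 0; first by rewrite fj0 !mul0r.
have [fj'0|nz_fj'] := eqVneq (f j') 0; first by rewrite fj'0 rmorph0 mulr0 mul0r.
by move: neq_j'; rewrite (h_inj _ _ nz_fj' nz_fj eq_h) eqxx.
Qed.

End PauliOrthogonality.

Section SplitQubits.
Variables (n : nat) (S : {set 'I_n}).

Definition restr_in (A : Type) (x : {ffun 'I_n -> A}) : {ffun inS S -> A} :=
  [ffun j => x (val j)].
Definition restr_out (A : Type) (x : {ffun 'I_n -> A}) : {ffun outS S -> A} :=
  [ffun j => x (val j)].

Lemma glue_in (aS : {ffun inS S -> bool}) (aR : {ffun outS S -> bool}) (j : inS S) :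
  glue aS aR (val j) = aS j.
Proof. by rewrite ffunE valK. Qed.

Lemma glue_out (aS : {ffun inS S -> bool}) (aR : {ffun outS S -> bool}) (j : outS S) :
  glue aS aR (val j) = aR j.
Proof. by rewrite ffunE insubN ?(valP j) // valK. Qed.

Lemma restr_inj (A : Type) (x x' : {ffun 'I_n -> A}) :
  restr_in x = restr_in x' -> restr_out x = restr_out x' -> x = x'.
Proof.
move=> eq_in eq_out; apply/ffunP => i; have [iS|iNS] := boolP (i \in S).
  by move/ffunP/(_ (exist _ i iS)): eq_in; rewrite !ffunE.
by move/ffunP/(_ (exist _ i iNS)): eq_out; rewrite !ffunE.
Qed.

Lemma pauli_glue (C : numClosedFieldType) (x : {ffun 'I_n -> 'I_4})
    (aS bS : {ffun inS S -> bool}) (c d : {ffun outS S -> bool}) :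
  pauli C x (glue aS c) (glue bS d)
  = tensor_pauli C (restr_in x) aS bS * tensor_pauli C (restr_out x) c d.
Proof.
rewrite /pauli (bigID (mem S)) /= (big_sub S) (big_sub (fun i => i \notin S)).
by congr (_ * _); apply: eq_bigr => j _; rewrite ?glue_in ?glue_out ffunE.
Qed.

Lemma Xval_restr_in (C : numClosedFieldType) (x : {ffun 'I_n -> 'I_4}) :
  Xval C (restr_in x) = (supp_meets x S)%:R.
Proof.
rewrite /Xval /supp_meets; have [eq0|neq0] := eqVneq (restr_in x) [ffun => ord0].
  case: existsP => // -[i /andP [iS]].
  by move/ffunP/(_ (exist _ i iS)): eq0; rewrite !ffunE => ->.
case: existsP => // noS; case/eqP: neq0; apply/ffunP => -[i iS]; rewrite !ffunE.
by apply/eqP/negPn/negP => nz_i; apply: noS; exists i; rewrite iS.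
Qed.

End SplitQubits.

Section BellMeasurement.
Variables (C : numClosedFieldType) (n : nat) (S : {set 'I_n}).

Lemma card_inS : #|{: inS S}| = #|S|.
Proof. by rewrite card_sig; apply: eq_card. Qed.

Lemma card_outS : #|{: outS S}| = #|~: S|.
Proof. by rewrite card_sig; apply: eq_card => i; rewrite !inE. Qed.

Lemma conjC_div_sqrtC_nat (z : C) (k : nat) :
  (z / sqrtC k%:R)^* = z^* / sqrtC k%:R.
Proof.
have sqrt_real : (sqrtC k%:R)^* = sqrtC k%:R :> C.
  by apply/conj_Creal/ger0_real; rewrite sqrtC_ge0 ler0n.
by rewrite rmorphM fmorphV; congr (_ * _^-1); exact: sqrt_real.
Qed.

(* [2 ^+ #|S|] comes from Pauli orthogonality on the measured qubits, the square
   roots from the normalisations of the Bell and Choi states. *)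
Definition bell_choi_scale : C :=
  2 ^+ #|S| / (sqrtC (2 ^ #|S|)%:R * sqrtC (2 ^ n)%:R).

Lemma bell_choi_scale_normalization :
  `|bell_choi_scale| ^+ 2 * 2 ^+ #|{: outS S}| = 1.
Proof.
have sqrtC2X k : `|sqrtC (2 ^ k)%:R| ^+ 2 = 2 ^+ k :> C.
  by rewrite ger0_norm ?sqrtC_ge0 ?ler0n // sqrtCK natrX.
rewrite /bell_choi_scale normrM normfV normrM !exprMn exprVn exprMn !sqrtC2X.
have splitn : (#|S| + #|~: S|)%N = n by rewrite cardsC card_ord.
rewrite normrX normr_nat card_outS -[in 2 ^+ n]splitn exprD.
by field; rewrite !expf_neq0 // pnatr_eq0.
Qed.

Variables (U : qmat C n) (cf : {ffun 'I_n -> 'I_4} -> C).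
Hypothesis U_pauli : forall a b, U a b = \sum_x cf x * pauli C x a b.

Lemma post_amp_pauli y c d :
  post_amp U y c d = bell_choi_scale *
    \sum_x (restr_in S x == y)%:R * cf x * tensor_pauli C (restr_out S x) c d.
Proof.
pose sqS : C := sqrtC (2 ^ #|S|)%:R; pose sqN : C := sqrtC (2 ^ n)%:R.
have term aS bS : (bellS C y aS bS)^* * choi U (glue aS c) (glue bS d)
    = (sqS * sqN)^-1 * \sum_x cf x * tensor_pauli C (restr_out S x) c d *
        ((tensor_pauli C y aS bS)^* * tensor_pauli C (restr_in S x) aS bS).
  rewrite /bellS /choi U_pauli conjC_div_sqrtC_nat.
  rewrite !mulr_suml !mulr_sumr; apply: eq_bigr => x _.
  rewrite pauli_glue -/sqS -/sqN invfM; ring.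
rewrite /post_amp; under eq_bigr do under eq_bigr do rewrite term.
under eq_bigr do rewrite -mulr_sumr exchange_big.
rewrite -mulr_sumr exchange_big /= /bell_choi_scale -/sqS -/sqN.
rewrite [2 ^+ _ / _]mulrC -mulrA.
congr (_ * _); rewrite mulr_sumr; apply: eq_bigr => x _.
under eq_bigr do rewrite -mulr_sumr.
rewrite -mulr_sumr tensor_pauli_orthogonal card_inS eq_sym; ring.
Qed.

Lemma outcome_prob_pauli y :
  outcome_prob U y = \sum_x (restr_in S x == y)%:R * `|cf x| ^+ 2.
Proof.
rewrite /outcome_prob.
under eq_bigr do under eq_bigr do rewrite post_amp_pauli normrM exprMn.
under eq_bigr do rewrite -mulr_sumr.
rewrite -mulr_sumr tensor_pauli_parseval => [|x x']; last first.
  have [<-|] := eqVneq (restr_in S x) y; last by rewrite mul0r eqxx.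
  have [eq_in|] := eqVneq (restr_in S x') (restr_in S x); last by rewrite mul0r eqxx.
  by move=> _ _; exact: restr_inj (esym eq_in).
rewrite mulrA bell_choi_scale_normalization mul1r.
apply: eq_bigr => x _; rewrite normrM exprMn normr_nat.
by case: (_ == _); rewrite ?expr1n ?expr0n.
Qed.

End BellMeasurement.

Theorem mainTheorem7 (C : numClosedFieldType) (n : nat) (U : qmat C n)
    (c : {ffun 'I_n -> 'I_4} -> C) (S : {set 'I_n}) :
  unitary U ->
  (forall a b : bits n, U a b = \sum_(x : {ffun 'I_n -> 'I_4}) c x * pauli C x a b) ->
  expect_X U S = influence c S.
Proof.
move=> _ U_pauli; rewrite /expect_X /influence.
under eq_bigr do rewrite (outcome_prob_pauli U_pauli) mulr_suml.
rewrite exchange_big [RHS]big_mkcond; apply: eq_bigr => x _.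
rewrite (bigD1 (restr_in S x)) //= eqxx big1 => [|y neq_y]; last first.
  by rewrite eq_sym (negbTE neq_y) !mul0r.
by rewrite addr0 mul1r Xval_restr_in; case: supp_meets; rewrite ?mulr1 ?mulr0.
Qed.
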